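(* Let $\sigma\colon\mathcal{A}^+\to\mathcal{B}^+$ be a morphism, $u,v\in\mathcal{A}^+$, let $a,b$ be the first letters of $u,v$ respectively, and let $\sigma(a)=st$ with $t$ nonempty (and $s$ possibly empty). Assume that $\sigma(u)$ is a prefix of $s\sigma(v)$, that $|u|\ge|\sigma|_1+|s|$, and that either ($s$ is empty and $a\neq b$) or $s$ is nonempty. Then there exist an alphabet $\mathcal{C}$ and morphisms $q\colon\mathcal{A}^+\to\mathcal{C}^+$, $p\colon\mathcal{C}^+\to\mathcal{B}^+$ such that $\#\mathcal{C}\le\#\mathcal{A}$, $q$ is letter-onto, $|p|_1<|\sigma|_1$, and $\sigma=pq$.
   Context: Alphabets are finite sets; $\mathcal{A}^+$ is the free semigroup of nonempty finite words over $\mathcal{A}$; a morphism is a semigroup homomorphism. For a morphism $\sigma\colon\mathcal{A}^+\to\mathcal{B}^+$, $|\sigma|_1=\sum_{a\in\mathcal{A}}|\sigma(a)|$. A word $w$ is a prefix of $w'$ if $w'=wr$ for some possibly empty word $r$. $q$ is letter-onto if every letter of its target alphabet occurs in some $q(a)$. *)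

(* Alphabets = finTypes; nonempty words = nonempty seqs;
   a morphism A^+ -> B^+ is given by its images of letters (each nonempty),
   extended to words by concatenation. *)
From mathcomp Require Import all_boot.
Set Implicit Arguments. Unset Strict Implicit. Unset Printing Implicit Defensive.

Definition is_morph (A B : finType) (f : A -> seq B) : Prop :=
  forall a, f a != [::].

Definition mext (A B : finType) (f : A -> seq B) (w : seq A) : seq B :=
  flatten (map f w).

Definition norm1 (A B : finType) (f : A -> seq B) : nat :=
  \sum_(a : A) size (f a).

Definition is_prefix (B : Type) (w w' : seq B) : Prop :=
  exists r, w' = w ++ r.

Definition letter_onto (A C : finType) (q : A -> seq C) : Prop :=
  forall c : C, exists a : A, c \in q a.

(* Suppose σ(u) and σ(v) are prefix-comparable, both of length at least |σ|_1,
   and u, v start with letters a ≠ b.  Then σ(a) and σ(b) are comparable, say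
   σ(b) = σ(a)w.  If w is empty, identify a with b.  Otherwise σ = τρ, where ρ is
   the Nielsen morphism b ↦ ab and τ agrees with σ except τ(b) = w; ρ is
   letter-onto and |τ|_1 = |σ|_1 - |σ(a)|.  Cancelling σ(a) leaves τ-images of
   two words starting with different letters, still comparable and still long
   enough, so induction on |σ|_1 applies.  When s is nonempty, a fresh letter
   with image s splits σ(a) = st in the same way, at the cost of one more letter
   in the alphabet and without changing |σ|_1. *)

From mathcomp Require Import all_boot.
From mathcomp Require Import zify.
Set Implicit Arguments. Unset Strict Implicit. Unset Printing Implicit Defensive.

Lemma catI (T : Type) : right_injective (@cat T).
Proof. by move=> s s1 s2 /(congr1 (drop (size s))); rewrite !drop_size_cat. Qed.

Lemma cat_eq_prefix (T : Type) (s1 s2 X Y : seq T) :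
  s1 ++ X = s2 ++ Y -> size s1 <= size s2 -> s2 = s1 ++ drop (size s1) s2.
Proof.
move=> E le12; have := congr1 (take (size s1)) E.
rewrite take_size_cat // takel_cat // => E1.
by rewrite {1}E1 cat_take_drop.
Qed.

Lemma mext_cons (A B : finType) (sigma : A -> seq B) a w :
  mext sigma (a :: w) = sigma a ++ mext sigma w.
Proof. by []. Qed.

Lemma mext_cat (A B : finType) (sigma : A -> seq B) w1 w2 :
  mext sigma (w1 ++ w2) = mext sigma w1 ++ mext sigma w2.
Proof. by rewrite /mext map_cat flatten_cat. Qed.

Lemma mext_map (A A' B : finType) (f : A' -> A) (sigma : A -> seq B) w :
  mext sigma (map f w) = mext (sigma \o f) w.
Proof. by rewrite /mext map_comp. Qed.

Lemma mext_comp (A A' B : finType) (rho : A -> seq A') (tau : A' -> seq B) w :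
  mext (fun a => mext tau (rho a)) w = mext tau (mext rho w).
Proof. by elim: w => [|a w IH] //; rewrite !mext_cons IH mext_cat. Qed.

Lemma eq_mext (A B : finType) (f g : A -> seq B) : f =1 g -> mext f =1 mext g.
Proof. by move=> Efg w; rewrite /mext (eq_map Efg). Qed.

Lemma size_morph_gt0 (A B : finType) (sigma : A -> seq B) a :
  is_morph sigma -> 0 < size (sigma a).
Proof. by move=> morph_sigma; rewrite lt0n size_eq0. Qed.

Lemma size_mext (A B : finType) (sigma : A -> seq B) w :
  is_morph sigma -> size w <= size (mext sigma w).
Proof.
move=> morph_sigma; elim: w => [|a w IH] //.
rewrite mext_cons size_cat [size (_ :: _)]/=.
by have := size_morph_gt0 a morph_sigma; lia.
Qed.

Lemma size_le_norm1 (A B : finType) (sigma : A -> seq B) a :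
  size (sigma a) <= norm1 sigma.
Proof. by rewrite /norm1 (bigD1 a) //= leq_addr. Qed.

Lemma norm1_gt0 (A B : finType) (sigma : A -> seq B) (a : A) :
  is_morph sigma -> 0 < norm1 sigma.
Proof.
by move=> morph_sigma; apply: leq_trans (size_morph_gt0 a morph_sigma) (size_le_norm1 _ _).
Qed.

Lemma norm1_oapp (A B : finType) (sigma : A -> seq B) (s : seq B) :
  norm1 (oapp sigma s) = size s + norm1 sigma.
Proof.
rewrite /norm1 (bigD1 None) //=; congr (_ + _).
rewrite (reindex_omap Some id) //=; last by case.
by apply: eq_bigl => z; rewrite /= eqxx.
Qed.

Lemma morph_comp (A A' B : finType) (rho : A -> seq A') (tau : A' -> seq B) :
  is_morph rho -> is_morph tau -> is_morph (fun a => mext tau (rho a)).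
Proof.
move=> morph_rho morph_tau a; have := morph_rho a.
case: (rho a) => [|a' w] // _; rewrite mext_cons.
by have := morph_tau a'; case: (tau a').
Qed.

Lemma letter_onto_comp (A A' B : finType) (rho : A -> seq A') (tau : A' -> seq B) :
  letter_onto rho -> letter_onto tau -> letter_onto (fun a => mext tau (rho a)).
Proof.
move=> onto_rho onto_tau c; have [a' ca'] := onto_tau c; have [a a'a] := onto_rho a'.
by exists a; apply/flatten_mapP; exists a'.
Qed.

Definition decomposable (A B : finType) (n : nat) (sigma : A -> seq B) : Prop :=
  exists (C : finType) (q : A -> seq C) (p : C -> seq B),
    [/\ is_morph q /\ is_morph p, #|C| <= n, letter_onto q,
        norm1 p < norm1 sigma &
        forall w : seq A, mext sigma w = mext p (mext q w)].

Lemma decomposableW (A B : finType) (m n : nat) (sigma : A -> seq B) :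
  m <= n -> decomposable m sigma -> decomposable n sigma.
Proof.
move=> le_mn [C [q [p [morph card_le onto lt_norm E]]]].
by exists C, q, p; split=> //; apply: leq_trans le_mn.
Qed.

Lemma decomposable_comp (A A' B : finType) (n : nat) (sigma : A -> seq B)
    (rho : A -> seq A') (tau : A' -> seq B) :
  is_morph rho -> letter_onto rho -> norm1 tau <= norm1 sigma ->
  (forall w, mext sigma w = mext tau (mext rho w)) ->
  decomposable n tau -> decomposable n sigma.
Proof.
move=> morph_rho onto_rho le_norm E.
move=> [C [q [p [[morph_q morph_p] card_le onto_q lt_norm Eq]]]].
exists C, (fun a => mext q (rho a)), p; split=> //.
- by split=> //; apply: morph_comp.
- exact: letter_onto_comp.
- exact: leq_trans lt_norm le_norm.
- by move=> w; rewrite E Eq mext_comp.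
Qed.

Lemma decomposable_merge (A B : finType) (sigma : A -> seq B) (x y : A) :
  is_morph sigma -> y != x -> sigma x = sigma y -> decomposable #|A|.-1 sigma.
Proof.
move=> morph_sigma neq_yx Exy.
pose y' : {z : A | z != x} := Sub y neq_yx.
exists _, (fun z => [:: insubd y' z]), (fun c => sigma (val c)); split.
- by split=> // c; apply: morph_sigma.
- by rewrite card_sig -(cardC1 x).
- by move=> c; exists (val c); rewrite valKd mem_seq1.
- rewrite /norm1 -(big_sub (fun z => z != x) (fun z => size (sigma z))).
  by rewrite [X in _ < X](bigD1 x) //= -[X in X < _]add0n ltn_add2r size_morph_gt0.
- elim=> [|z w IH] //; rewrite !mext_cons IH val_insubd /=.
  by case: (eqVneq z x) => [->|//]; rewrite Exy.
Qed.

Section Nielsen.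

Variables (A B : finType) (x y : A).

Definition nielsen (z : A) : seq A := if z == y then [:: x; y] else [:: z].

Definition set_image (sigma : A -> seq B) (w : seq B) (z : A) : seq B :=
  if z == y then w else sigma z.

Lemma morph_nielsen : is_morph nielsen.
Proof. by move=> z; rewrite /nielsen; case: ifP. Qed.

Lemma mem_nielsen z : z \in nielsen z.
Proof. by rewrite /nielsen; case: eqVneq => [->|_]; rewrite !inE eqxx ?orbT. Qed.

Lemma letter_onto_nielsen : letter_onto nielsen.
Proof. by move=> z; exists z; apply: mem_nielsen. Qed.

Lemma norm1_set_image sigma w :
  norm1 (set_image sigma w) + size (sigma y) = norm1 sigma + size w.
Proof.
rewrite /norm1 (bigD1 y) // [in RHS](bigD1 y) //= {1}/set_image eqxx.
rewrite (eq_bigr (fun z => size (sigma z))) => [|z /negbTE z_y]; first lia.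
by rewrite /set_image z_y.
Qed.

Lemma morph_set_image sigma w :
  is_morph sigma -> w != [::] -> is_morph (set_image sigma w).
Proof. by move=> morph_sigma w0 z; rewrite /set_image; case: ifP. Qed.

Hypothesis neq_xy : x != y.

Lemma ohead_mext_nielsen u : ohead (mext nielsen u) != Some y.
Proof.
case: u => [|z u] //; rewrite mext_cons /nielsen.
by case: (eqVneq z y) => [_|z_y] /=; [exact: neq_xy | exact: z_y].
Qed.

Variables (sigma : A -> seq B) (w : seq B).
Hypothesis sigma_y : sigma y = sigma x ++ w.

Lemma mext_nielsen u : mext sigma u = mext (set_image sigma w) (mext nielsen u).
Proof.
rewrite -mext_comp; apply: eq_mext => z; rewrite /nielsen /set_image.
case: (eqVneq z y) => [->|z_y]; rewrite !mext_cons cats0 /=; last by rewrite (negbTE z_y).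
by rewrite eqxx (negbTE neq_xy) sigma_y.
Qed.

Lemma mext_cons_nielsenl u :
  mext sigma (x :: u) = sigma x ++ mext (set_image sigma w) (mext nielsen u).
Proof. by rewrite mext_cons mext_nielsen. Qed.

Lemma mext_cons_nielsenr v :
  mext sigma (y :: v) = sigma x ++ mext (set_image sigma w) (y :: mext nielsen v).
Proof. by rewrite mext_cons mext_nielsen sigma_y -catA mext_cons /set_image eqxx. Qed.

End Nielsen.

Lemma decomposable_of_comparable (A B : finType) (sigma : A -> seq B)
    (u v : seq A) (X Y : seq B) :
  is_morph sigma -> ohead u != ohead v ->
  mext sigma u ++ X = mext sigma v ++ Y ->
  norm1 sigma <= size (mext sigma u) -> norm1 sigma <= size (mext sigma v) ->
  decomposable #|A|.-1 sigma.
Proof.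
move=> morph_sigma; have [n] := ubnP (norm1 sigma).
elim: n => // n IH in sigma u v X Y morph_sigma *; rewrite ltnS => le_norm.
case: u v => [|a u] [|b v] //= neq_ab E le_u le_v.
- by have := norm1_gt0 b morph_sigma; lia.
- by have := norm1_gt0 a morph_sigma; lia.
have {}neq_ab : a != b by [].
wlog le_ab : a b u v X Y neq_ab E le_u le_v / size (sigma a) <= size (sigma b).
  move=> wlog_le; case: (leqP (size (sigma a)) (size (sigma b))) => [|/ltnW] le_ab.
    exact: (wlog_le a b u v X Y).
  by apply: (wlog_le b a v u Y X); rewrite // eq_sym.
have sigma_b : sigma b = sigma a ++ drop (size (sigma a)) (sigma b).
  apply: (cat_eq_prefix (X := mext sigma u ++ X) (Y := mext sigma v ++ Y) _ le_ab).
  by rewrite !catA -!mext_cons.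
set w := drop _ _ in sigma_b.
have [w0|w_neq0] := eqVneq w [::].
  by apply: (decomposable_merge (x := b) (y := a)); rewrite // sigma_b w0 cats0.
have norm_tau : norm1 (set_image b sigma w) + size (sigma a) = norm1 sigma.
  by have := norm1_set_image b sigma w; rewrite sigma_b size_cat; lia.
apply: (decomposable_comp (morph_nielsen a b) (letter_onto_nielsen a b)
          _ (mext_nielsen neq_ab sigma_b)); first lia.
have a_gt0 := size_morph_gt0 a morph_sigma.
have Eab := mext_cons_nielsenl neq_ab sigma_b.
have Eba := mext_cons_nielsenr neq_ab sigma_b.
have E' : mext (set_image b sigma w) (mext (nielsen a b) u) ++ X =
          mext (set_image b sigma w) (b :: mext (nielsen a b) v) ++ Y.
  by apply: (@catI _ (sigma a)); rewrite catA [in RHS]catA -Eab -Eba.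
apply: (IH _ _ (b :: _) X Y _ _ (ohead_mext_nielsen neq_ab _) E').
- exact: morph_set_image.
- lia.
- by move: le_u; rewrite Eab size_cat; lia.
- by move: le_v; rewrite Eba size_cat; lia.
Qed.

Lemma decomposable_of_shifted_prefix (A B : finType) (sigma : A -> seq B) (a : A)
    (u v : seq A) (s t r : seq B) :
  is_morph sigma -> sigma a = s ++ t -> s != [::] -> t != [::] ->
  mext sigma (a :: u) ++ r = s ++ mext sigma v ->
  norm1 sigma + size s <= size (a :: u) -> decomposable #|A| sigma.
Proof.
move=> morph_sigma sigma_a s0 t0 E le_u.
pose sigma' : option A -> seq B := oapp sigma s.
have neq_Na : None != Some a by [].
have sigma'_a : sigma' (Some a) = sigma' None ++ t by [].
have mext_some w : mext sigma w = mext sigma' (map Some w) by rewrite mext_map.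
pose tau := set_image (Some a) sigma' t; pose rho := nielsen None (Some a).
have norm_tau : norm1 tau = norm1 sigma.
  rewrite /tau; have := norm1_set_image (Some a) sigma' t.
  by rewrite norm1_oapp sigma'_a size_cat /sigma' /=; lia.
apply: (decomposable_comp (rho := rho \o Some) (tau := tau)).
- by move=> z; apply: morph_nielsen.
- case=> [z|]; first by exists z; apply: mem_nielsen.
  by exists a; rewrite /= /rho /nielsen eqxx mem_head.
- by rewrite norm_tau.
- by move=> w; rewrite mext_some (mext_nielsen neq_Na sigma'_a) mext_map.
have Eu : mext sigma (a :: u) = s ++ mext tau (Some a :: mext rho (map Some u)).
  by rewrite mext_some; exact: (mext_cons_nielsenr neq_Na sigma'_a).
have Ev : s ++ mext sigma v = s ++ mext tau (mext rho (map Some v)).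
  by rewrite mext_some; exact: (mext_cons_nielsenl neq_Na sigma'_a).
move: (E); rewrite Eu Ev -catA => /catI E'.
have le_u' : norm1 tau <= size (mext tau (Some a :: mext rho (map Some u))).
  by rewrite norm_tau; move: (size_mext (a :: u) morph_sigma); rewrite Eu size_cat; lia.
have -> : #|A| = #|{: option A}|.-1 by rewrite card_option.
have morph_tau : is_morph tau by apply: morph_set_image; first by case.
apply: (decomposable_of_comparable morph_tau _
          (etrans E' (esym (cats0 _))) le_u').
- by rewrite eq_sym; exact: (ohead_mext_nielsen neq_Na).
- by move: le_u'; rewrite -E' size_cat; lia.
Qed.

Theorem lemma3p4 (A B : finType) (sigma : A -> seq B) (u v : seq A) (a b : A)
    (s t : seq B) :
  is_morph sigma ->
  ohead u = Some a -> ohead v = Some b ->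
  sigma a = s ++ t -> t != [::] ->
  is_prefix (mext sigma u) (s ++ mext sigma v) ->
  norm1 sigma + size s <= size u ->
  ((s = [::] /\ a != b) \/ s != [::]) ->
  exists (C : finType) (q : A -> seq C) (p : C -> seq B),
    [/\ is_morph q /\ is_morph p, #|C| <= #|A|, letter_onto q,
        norm1 p < norm1 sigma &
        forall w : seq A, mext sigma w = mext p (mext q w)].
Proof.
move=> morph_sigma u_a v_b sigma_a t0 [r Er] le_u [[s0 neq_ab]|s0].
  subst s; apply: (decomposableW (leq_pred _)).
  have E : mext sigma u ++ r = mext sigma v ++ [::] by rewrite cats0 -Er.
  have le_u' : norm1 sigma <= size (mext sigma u).
    by apply: leq_trans (size_mext u morph_sigma); rewrite -(addn0 (norm1 _)).
  apply: (decomposable_of_comparable morph_sigma _ E le_u').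
  - by rewrite u_a v_b.
  - by move: le_u'; rewrite -[mext sigma v]cat0s Er size_cat; lia.
case: u u_a Er le_u => [|a' u] //= [->] Er le_u.
exact: (decomposable_of_shifted_prefix morph_sigma sigma_a s0 t0 (esym Er) le_u).
Qed.
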